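(* Let $f:\mathbb{R}^n\to\mathbb{R}$ be differentiable, $L$-smooth and $m$-strongly convex ($0<m\le L$), with unique minimizer $x_*$ (so $\nabla f(x_* )=0$). Let $0<\mu<2$, $\delta>0$, $\alpha>0$, and let constants $0<c_1\le c_2<+\infty$ be given. Consider the adaptive fractional order gradient descent (AFOGD) iteration, started from $x_0,x_1\in\mathbb{R}^n$, $$x_{k+1}=x_k-\alpha\,\nabla f(x_k)\,\beta_k\,(\|x_k-x_{k-1}\|_2+\delta)^{1-\mu},$$ where the scalars $\beta_k>0$ are chosen so that $0<c_1\le \beta_k(\|x_k-x_{k-1}\|_2+\delta)^{1-\mu}\le c_2<+\infty$ for all $k$. Write it as the dynamical system $\xi_{k+1}=A\xi_k+Bu_k$, $y_k=C\xi_k$, $x_k=E\xi_k$ with $\xi_k=x_k$, $A=I_n$, $B=-\alpha I_n$, $C=I_n$, $E=I_n$ and input $u_k=\nabla f(x_k)\,\beta_k(\|x_k-x_{k-1}\|_2+\delta)^{1-\mu}$. Suppose: 1. there are fixed points $\xi_*,u_*,y_*$ with $\xi_*=A\xi_*+Bu_*$, $y_*=C\xi_*$, $u_*=\nabla f(y_* )\cdot(\text{the corresponding scaling})$ and $x_*=E\xi_*=y_*$; 2. there exists a symmetric matrix $N\in\mathbb{R}^{2n\times 2n}$ such that $e_k^\top N e_k\ge 0$ for all $k$, where $e_k=[(\xi_k-\xi_* )^\top,(u_k-u_* )^\top]^\top$; 3. there exist a constant $h\ge 0$, a constant $\rho\in(0,1)$, and a positive definite matrix $P$ (with the given $\alpha>0$)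 such that $M+hN\preceq 0$, where $$M=\begin{bmatrix}A^\top PA-\rho^2P & A^\top PB\\ B^\top PA & B^\top PB\end{bmatrix}.$$ Then the sequence $\{x_k\}$ converges $R$-linearly to $x_*$.
   Context: A differentiable $f$ is $L$-smooth if $\|\nabla f(x)-\nabla f(y)\|_2\le L\|x-y\|_2$ for all $x,y$, and $m$-strongly convex if $m\|x-y\|_2^2\le (x-y)^\top(\nabla f(x)-\nabla f(y))$ for all $x,y$. A sequence $\{x_k\}$ converges $R$-linearly to $x_*$ with rate $\rho\in(0,1)$ if there is a constant $c>0$ with $\|x_k-x_*\|_2\le c\rho^k$ for all $k\in\mathbb{N}_+$. $I_n$ is the $n\times n$ identity matrix; $\preceq 0$ means negative semidefinite. *)

From HB Require Import structures.
From mathcomp Require Import all_boot all_order all_algebra.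
From mathcomp Require Import all_classical all_reals all_analysis.
Set Implicit Arguments. Unset Strict Implicit. Unset Printing Implicit Defensive.
Import Order.TTheory GRing.Theory Num.Theory.
Import numFieldNormedType.Exports.
Local Open Scope ring_scope.

Section Defs.
Variable R : realType.

Definition norm2 (n : nat) (v : 'cV[R]_n) : R :=
  Num.sqrt (\sum_(i < n) (v i 0) ^+ 2).

Definition qform (n : nat) (v : 'cV[R]_n) (Q : 'M[R]_n) (w : 'cV[R]_n) : R :=
  (v^T *m Q *m w) 0 0.

Definition grad (n : nat) (f : 'cV[R]_n -> R) (x : 'cV[R]_n) : 'cV[R]_n :=
  \col_i ('d f x (delta_mx i 0 : 'cV[R]_n)).

Definition L_smooth (n : nat) (f : 'cV[R]_n -> R) (L : R) : Prop :=
  forall x y, norm2 (grad f x - grad f y) <= L * norm2 (x - y).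

Definition strongly_convex (n : nat) (f : 'cV[R]_n -> R) (m : R) : Prop :=
  forall x y, m * norm2 (x - y) ^+ 2 <= ((x - y)^T *m (grad f x - grad f y)) 0 0.

Definition sym_mx (n : nat) (Q : 'M[R]_n) : Prop := Q^T = Q.

Definition posdef (n : nat) (Q : 'M[R]_n) : Prop :=
  Q^T = Q /\ forall v : 'cV[R]_n, v != 0 -> 0 < qform v Q v.

Definition nsd (n : nat) (Q : 'M[R]_n) : Prop :=
  forall v : 'cV[R]_n, qform v Q v <= 0.

End Defs.

(* With V_k = (x_k - x_* )^T P (x_k - x_* ), the fixed-point equations force u_* = 0
   and x_* = xi_*, so x_(k+1) - x_* = A (x_k - x_* ) + B u_k.  Testing the LMI
   M + h N <= 0 against e_k gives V_(k+1) - rho^2 V_k + h e_k^T N e_k <= 0, hence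
   V_(k+1) <= rho^2 V_k by the quadratic constraint, and V_k decays like rho^(2k).
   As P is positive definite, ||v||^2 <= c v^T P v for some c > 0, so
   ||x_k - x_*|| is O(rho^k). *)

From HB Require Import structures.
From mathcomp Require Import all_boot all_order all_algebra.
From mathcomp Require Import all_classical all_reals all_analysis.
From mathcomp Require Import lra.
Import Order.TTheory GRing.Theory Num.Theory.
Import numFieldNormedType.Exports.
Set Implicit Arguments. Unset Strict Implicit. Unset Printing Implicit Defensive.
Local Open Scope ring_scope.

Section QuadraticForms.
Variable R : realType.
Implicit Types (n : nat).

Lemma qformDl n (a b c : 'cV[R]_n) Q : qform (a + b) Q c = qform a Q c + qform b Q c.
Proof. by rewrite /qform linearD /= !mulmxDl mxE. Qed.

Lemma qformDr n (a b c : 'cV[R]_n) Q : qform c Q (a + b) = qform c Q a + qform c Q b.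
Proof. by rewrite /qform !mulmxDr mxE. Qed.

Lemma qformZl n (a c : 'cV[R]_n) t Q : qform (t *: a) Q c = t * qform a Q c.
Proof. by rewrite /qform linearZ /= -!scalemxAl mxE. Qed.

Lemma qformZr n (a c : 'cV[R]_n) t Q : qform c Q (t *: a) = t * qform c Q a.
Proof. by rewrite /qform -!scalemxAr mxE. Qed.

Lemma qformDm n (a c : 'cV[R]_n) Q1 Q2 :
  qform a (Q1 + Q2) c = qform a Q1 c + qform a Q2 c.
Proof. by rewrite /qform mulmxDr mulmxDl mxE. Qed.

Lemma qformZm n (a c : 'cV[R]_n) t Q : qform a (t *: Q) c = t * qform a Q c.
Proof. by rewrite /qform -scalemxAr -scalemxAl mxE. Qed.

Lemma qformBm n (a c : 'cV[R]_n) Q1 Q2 :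
  qform a (Q1 - Q2) c = qform a Q1 c - qform a Q2 c.
Proof. by rewrite qformDm -scaleN1r qformZm mulN1r. Qed.

Lemma qform0l n (c : 'cV[R]_n) Q : qform 0 Q c = 0.
Proof. by rewrite /qform trmx0 !mul0mx mxE. Qed.

Lemma qform_mulmx n (A B Q : 'M[R]_n) (z w : 'cV[R]_n) :
  qform (A *m z) Q (B *m w) = qform z (A^T *m Q *m B) w.
Proof. by rewrite /qform trmx_mul !mulmxA. Qed.

Lemma qform_sym n (a c : 'cV[R]_n) Q : sym_mx Q -> qform a Q c = qform c Q a.
Proof.
move=> sQ; rewrite /qform -[in RHS]sQ -[a in RHS]trmxK -!trmx_mul mulmxA.
by rewrite [RHS]mxE.
Qed.

Lemma qform_col_block n (a b : 'cV[R]_n) Q11 Q12 Q21 Q22 :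
  qform (col_mx a b) (block_mx Q11 Q12 Q21 Q22) (col_mx a b) =
  qform a Q11 a + qform a Q12 b + qform b Q21 a + qform b Q22 b.
Proof.
by rewrite /qform tr_col_mx mul_row_block mul_row_col !mulmxDl !mxE addrACA !addrA.
Qed.

Lemma norm2_sqr n (v : 'cV[R]_n) : norm2 v ^+ 2 = qform v 1%:M v.
Proof.
rewrite sqr_sqrtr ?sumr_ge0 // => [|i _]; last exact: sqr_ge0.
by rewrite /qform mulmx1 mxE; apply: eq_bigr => i _; rewrite mxE expr2.
Qed.

Lemma sqr_coord_le_norm2 n (v : 'cV[R]_n) i : v i 0 ^+ 2 <= norm2 v ^+ 2.
Proof.
rewrite sqr_sqrtr ?sumr_ge0 // => [|j _]; last exact: sqr_ge0.
by rewrite (bigD1 i) //= lerDl sumr_ge0 // => j _; apply: sqr_ge0.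
Qed.

Lemma qform_le_norm2 n (Q : 'M[R]_n) :
  exists2 c, 0 <= c & forall v, qform v Q v <= c * norm2 v ^+ 2.
Proof.
exists (\sum_i \sum_j `|Q i j|) => [|v].
  by apply: sumr_ge0 => i _; apply: sumr_ge0.
rewrite exchange_big /qform mxE big_distrl /=; apply: ler_sum => j _.
rewrite mxE !big_distrl /=; apply: ler_sum => i _; rewrite !mxE.
have cross : `|v i 0| * `|v j 0| <= norm2 v ^+ 2.
  have := sqr_coord_le_norm2 v i; have := sqr_coord_le_norm2 v j.
  rewrite -(real_normK (num_real (v i 0))) -(real_normK (num_real (v j 0))).
  have := sqr_ge0 (`|v i 0| - `|v j 0|); nra.
by rewrite (le_trans (ler_norm _)) // !normrM -mulrA mulrCA ler_wpM2l.
Qed.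

Lemma posdef_ge0 n (P : 'M[R]_n) v : posdef P -> 0 <= qform v P v.
Proof.
case=> _ Ppos; have [->|v0] := eqVneq v 0; first by rewrite qform0l.
exact/ltW/Ppos.
Qed.

Lemma posdef_unitmx n (P : 'M[R]_n) : posdef P -> P \in unitmx.
Proof.
case=> _ Ppos; rewrite unitmxE unitfE; apply/negP => /det0P [u u0 uP].
have uT0 : u^T != 0 by rewrite -trmx0 (inj_eq trmx_inj).
by have := Ppos _ uT0; rewrite /qform trmxK uP mul0mx mxE ltxx.
Qed.

(* Nonnegativity of the form of [P] at [(s + 1) v - P^-1 v], where [s] bounds
   the form of [P^-T] by the squared norm. *)
Lemma norm2_le_qform n (P : 'M[R]_n) : posdef P ->
  exists2 c, 0 < c & forall v, norm2 v ^+ 2 <= c * qform v P v.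
Proof.
move=> Ppd; have Pu := posdef_unitmx Ppd.
have [s s0 invPs] := qform_le_norm2 (invmx P)^T.
exists ((s + 1) ^+ 2); first by rewrite exprn_gt0 // ltr_wpDl.
move=> v; set w := invmx P *m v.
have vPw : qform v P w = norm2 v ^+ 2.
  by rewrite norm2_sqr /qform /w mulmxA -(mulmxA _ P) mulmxV // !mulmx1.
have wPw : qform w P w <= s * norm2 v ^+ 2.
  by rewrite /w qform_mulmx mulmxK //; apply: invPs.
have := posdef_ge0 ((s + 1) *: v - w) Ppd.
rewrite -(scaleN1r w) qformDl !qformDr !qformZl !qformZr (qform_sym w v Ppd.1) vPw.
have := posdef_ge0 v Ppd; have := sqr_ge0 (norm2 v); nra.
Qed.

Lemma lmi_lyapunov_decrease n (A B P : 'M[R]_n) (N : 'M[R]_(n + n)) h rho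
    (z w : 'cV[R]_n) :
  0 <= h -> 0 <= qform (col_mx z w) N (col_mx z w) ->
  nsd (block_mx (A^T *m P *m A - rho ^+ 2 *: P) (A^T *m P *m B)
                (B^T *m P *m A) (B^T *m P *m B) + h *: N) ->
  qform (A *m z + B *m w) P (A *m z + B *m w) <= rho ^+ 2 * qform z P z.
Proof.
move=> h0 Nzw LMI; have := LMI (col_mx z w).
rewrite qformDm qformZm qform_col_block qformBm qformZm -!qform_mulmx.
rewrite !qformDl !qformDr; have := mulr_ge0 h0 Nzw; lra.
Qed.

End QuadraticForms.

Section Sequences.
Variable R : realType.

Lemma geometric_le (V : nat -> R) r : 0 <= r ->
  (forall k, (0 < k)%N -> V k.+1 <= r * V k) -> forall k, V k.+1 <= r ^+ k * V 1%N.
Proof.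
move=> r0 step; elim=> [|k IH]; first by rewrite expr0 mul1r.
by rewrite (le_trans (step _ _)) // exprS -mulrA ler_wpM2l.
Qed.

Lemma Rlinear_of_sqr_le_geometric (a : nat -> R) K rho : 0 <= K -> 0 < rho ->
  (forall k, a k.+1 ^+ 2 <= K * (rho ^+ 2) ^+ k) ->
  exists c, 0 < c /\ forall k, (0 < k)%N -> a k <= c * rho ^+ k.
Proof.
move=> K0 rho0 aK; set c := Num.sqrt (K / rho ^+ 2) + 1.
have c0 : 0 < c by rewrite ltr_wpDl ?sqrtr_ge0.
exists c; split => // -[|k] // _.
have ck0 : 0 <= c * rho ^+ k.+1 by rewrite mulr_ge0 ?exprn_ge0 ?(ltW c0) ?(ltW rho0).
rewrite (le_trans (ler_norm _)) // -(ler_pXn2r (n := 2)) ?nnegrE ?normr_ge0 //.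
rewrite real_normK ?num_real // (le_trans (aK k)) //.
have -> : K * (rho ^+ 2) ^+ k = K / rho ^+ 2 * (rho ^+ k.+1) ^+ 2.
  by rewrite -[in RHS]exprM mulnC exprM [_ ^+ k.+1]exprS mulrA divfK // expf_neq0 ?gt_eqF.
rewrite exprMn ler_wpM2r ?exprn_ge0 ?(ltW rho0) // -[K / _]sqr_sqrtr ?divr_ge0 ?sqr_ge0 //.
by apply: lerXn2r; rewrite ?nnegrE ?sqrtr_ge0 ?(ltW c0) // lerDl.
Qed.

End Sequences.

Theorem theorem1 (R : realType) (n : nat) (f : 'cV[R]_n -> R) (L m : R)
  (xs : 'cV[R]_n) (mu delta alpha c1 c2 : R)
  (x : nat -> 'cV[R]_n) (beta : nat -> R)
  (xis us ys : 'cV[R]_n) (ss : R)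
  (N : 'M[R]_(n + n)) (h rho : R) (P : 'M[R]_n) :
  (forall z, differentiable f z) ->
  0 < m -> m <= L ->
  L_smooth f L -> strongly_convex f m ->
  (forall z, f xs <= f z) -> (forall z, f z = f xs -> z = xs) ->
  0 < mu -> mu < 2 -> 0 < delta -> 0 < alpha -> 0 < c1 -> c1 <= c2 ->
  (forall k, (0 < k)%N -> 0 < beta k) ->
  (forall k, (0 < k)%N ->
     c1 <= beta k * (norm2 (x k - x k.-1) + delta) `^ (1 - mu) <= c2) ->
  (forall k, (0 < k)%N ->
     x k.+1 = x k - alpha *:
       ((beta k * (norm2 (x k - x k.-1) + delta) `^ (1 - mu)) *: grad f (x k))) ->
  let A : 'M[R]_n := 1%:M in
  let B : 'M[R]_n := (- alpha)%:M in
  let C : 'M[R]_n := 1%:M in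
  let E : 'M[R]_n := 1%:M in
  let u k := (beta k * (norm2 (x k - x k.-1) + delta) `^ (1 - mu)) *: grad f (x k) in
  (* 1. fixed points *)
  xis = A *m xis + B *m us -> ys = C *m xis -> us = ss *: grad f ys ->
  xs = E *m xis -> xs = ys ->
  (* 2. quadratic constraint *)
  sym_mx N ->
  (forall k, (0 < k)%N ->
     let e := col_mx (x k - xis) (u k - us) in qform e N e >= 0) ->
  (* 3. LMI *)
  0 <= h -> 0 < rho -> rho < 1 -> posdef P ->
  nsd (block_mx (A^T *m P *m A - rho ^+ 2 *: P) (A^T *m P *m B)
                (B^T *m P *m A) (B^T *m P *m B) + h *: N) ->
  exists c : R, 0 < c /\
    forall k, (0 < k)%N -> norm2 (x k - xs) <= c * rho ^+ k.
Proof.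
(* Smoothness, strong convexity and the step-size bounds are needed only to
   establish the quadratic constraint on [e_k], which is assumed here. *)
move=> _ _ _ _ _ _ _ _ _ _ alpha0 _ _ _ _ step A B C E u fixA _ _ fixE _ _ QC
  h0 rho0 _ Ppd LMI.
have us0 : us = 0.
  move: fixA; rewrite /A /B mul1mx mul_scalar_mx -{1}[xis]addr0 => /addrI/esym/eqP.
  by rewrite scaler_eq0 oppr_eq0 gt_eqF // => /eqP.
have xsE : xs = xis by rewrite fixE mul1mx.
pose V k := qform (x k - xs) P (x k - xs).
have V_step k : (0 < k)%N -> V k.+1 <= rho ^+ 2 * V k.
  move=> k0; rewrite /V; have -> : x k.+1 - xs = A *m (x k - xs) + B *m (u k - us).
    by rewrite us0 subr0 mul1mx mul_scalar_mx step // scaleNr addrAC.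
  by apply: lmi_lyapunov_decrease h0 _ LMI; rewrite xsE; apply: QC.
have [c c0 normP] := norm2_le_qform Ppd.
apply: (@Rlinear_of_sqr_le_geometric _ (fun k => norm2 (x k - xs)) (c * V 1%N))
  => //.
- by rewrite mulr_ge0 ?(ltW c0) ?posdef_ge0.
- move=> k; rewrite (le_trans (normP _)) // -mulrA ler_wpM2l ?(ltW c0) //.
  by rewrite mulrC; apply: geometric_le (sqr_ge0 rho) V_step k.
Qed.
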